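(* Let $h:(\mathbb{R}^n,0)\to(\mathbb{R}^n,0)$ be a weak diffeomorphism. Then $h$ is an (SSP) homeomorphism, and $h$ satisfies condition semiline-(SSP).
   Context: A weak diffeomorphism is a homeomorphism germ $h:(\mathbb{R}^n,0)\to(\mathbb{R}^n,0)$ such that both $h$ and $h^{-1}$ are differentiable at $0$ (admit a linear approximation at $0$); equivalently $h(x)=M_h(x)+O_h(x)$ near $0$ with $M_h$ an invertible linear map and $\|O_h(x)\|/\|x\|\to0$ as $x\to0$, and similarly for $h^{-1}$. For a set-germ $A\subset\mathbb{R}^k$ at $0$ with $0\in\overline A$, $D(A)=\{a\in S^{k-1}:\exists\, x_i\in A\setminus\{0\},\ x_i\to0,\ x_i/\|x_i\|\to a\}$. For sequences, $\|u_m\|\ll\|v_m\|,\|w_m\|$ means $\|u_m\|/\|v_m\|\to0$ and $\|u_m\|/\|w_m\|\to0$. $A$ satisfies condition (SSP) if for every sequence $a_m\in\mathbb{R}^k$ tending to $0$ with $\lim a_m/\|a_m\|\in D(A)$ there is a sequence $b_m\in A$ with $\|a_m-b_m\|\ll\|a_m\|,\|b_m\|$. A homeomorphism germ $h$ is an (SSP) homeomorphism if its graph $\{(x,h(x))\}\subset\mathbb{R}^n\times\mathbb{R}^n$ satisfies condition (SSP) at $(0,0)$. A semiline is a set $\{ta: t\ge0\}$ with $a\in S^{n-1}$. A homeomorphism germ $h$ satisfies condition semiline-(SSP) if for every semiline $\ell$, the image $h(\ell)$ has a unique direction, i.e. $D(h(\ell))$ is a single point. *)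

From HB Require Import structures.
From mathcomp Require Import all_boot all_order all_algebra.
From mathcomp Require Import reals.
Set Implicit Arguments. Unset Strict Implicit. Unset Printing Implicit Defensive.
Import Order.TTheory GRing.Theory Num.Theory.
Local Open Scope ring_scope.

Section Defs.
Variable R : realType.

Definition enorm k (x : 'rV[R]_k) : R := Num.sqrt (\sum_i (x 0 i) ^+ 2).

(* x / ||x|| (equals 0 when x = 0) *)
Definition normalize k (x : 'rV[R]_k) : 'rV[R]_k := (enorm x)^-1 *: x.

Definition vcvg k (u : nat -> 'rV[R]_k) (l : 'rV[R]_k) : Prop :=
  forall e : R, 0 < e -> exists N : nat, forall m : nat, (N <= m)%N ->
    enorm (u m - l) < e.

Definition rcvg0 (r : nat -> R) : Prop :=
  forall e : R, 0 < e -> exists N : nat, forall m : nat, (N <= m)%N -> `|r m| < e.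

Definition negl k l (u : nat -> 'rV[R]_k) (v : nat -> 'rV[R]_l) : Prop :=
  rcvg0 (fun m => enorm (u m) / enorm (v m)).

Definition Dir k (A : 'rV[R]_k -> Prop) (a : 'rV[R]_k) : Prop :=
  enorm a = 1 /\
  exists x : nat -> 'rV[R]_k,
    (forall i, A (x i) /\ x i != 0) /\ vcvg x 0 /\ vcvg (fun i => normalize (x i)) a.

Definition SSP k (A : 'rV[R]_k -> Prop) : Prop :=
  forall a : nat -> 'rV[R]_k,
    vcvg a 0 ->
    (exists d, Dir A d /\ vcvg (fun m => normalize (a m)) d) ->
    exists b : nat -> 'rV[R]_k,
      (forall m, A (b m)) /\
      negl (fun m => a m - b m) a /\ negl (fun m => a m - b m) b.

Definition eopen k (U : 'rV[R]_k -> Prop) : Prop :=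
  forall x, U x -> exists r : R, 0 < r /\ forall y, enorm (y - x) < r -> U y.

Definition econt_on k l (U : 'rV[R]_k -> Prop) (f : 'rV[R]_k -> 'rV[R]_l) : Prop :=
  forall x, U x -> forall e : R, 0 < e -> exists d : R, 0 < d /\
    forall y, U y -> enorm (y - x) < d -> enorm (f y - f x) < e.

(* h : U -> V is a homeomorphism between open neighbourhoods of 0 with
   inverse g, and h 0 = 0: a representative of a homeomorphism germ
   (R^n,0) -> (R^n,0). *)
Definition homeo_germ n (U V : 'rV[R]_n -> Prop) (h g : 'rV[R]_n -> 'rV[R]_n) : Prop :=
  eopen U /\ eopen V /\ U 0 /\ V 0 /\ h 0 = 0 /\
  (forall x, U x -> V (h x) /\ g (h x) = x) /\
  (forall y, V y -> U (g y) /\ h (g y) = y) /\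
  econt_on U h /\ econt_on V g.

Definition diff_at0_inv n (U : 'rV[R]_n -> Prop) (f : 'rV[R]_n -> 'rV[R]_n) : Prop :=
  exists M : 'M[R]_n, M \in unitmx /\
    forall e : R, 0 < e -> exists d : R, 0 < d /\
      forall x, U x -> enorm x < d -> enorm (f x - x *m M) <= e * enorm x.

(* weak diffeomorphism: both h and h^{-1} differentiable at 0
   (the derivative of h at 0 is then necessarily invertible) *)
Definition weak_diffeo n (U V : 'rV[R]_n -> Prop) (h g : 'rV[R]_n -> 'rV[R]_n) : Prop :=
  homeo_germ U V h g /\ diff_at0_inv U h /\ diff_at0_inv V g.

Definition graph_on n (U : 'rV[R]_n -> Prop) (h : 'rV[R]_n -> 'rV[R]_n)
  (z : 'rV[R]_(n + n)) : Prop :=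
  exists x, U x /\ z = row_mx x (h x).

Definition semiline_image n (U : 'rV[R]_n -> Prop) (h : 'rV[R]_n -> 'rV[R]_n)
  (a : 'rV[R]_n) (y : 'rV[R]_n) : Prop :=
  exists t : R, 0 <= t /\ U (t *: a) /\ y = h (t *: a).

Definition semiline_SSP n (U : 'rV[R]_n -> Prop) (h : 'rV[R]_n -> 'rV[R]_n) : Prop :=
  forall a : 'rV[R]_n, enorm a = 1 ->
    exists d : 'rV[R]_n, forall c, Dir (semiline_image U h a) c <-> c = d.

End Defs.

From HB Require Import structures.
From mathcomp Require Import all_boot all_order all_algebra.
From mathcomp Require Import reals boolp.
From mathcomp Require Import ring lra.
Import Order.TTheory GRing.Theory Num.Theory.
Set Implicit Arguments. Unset Strict Implicit. Unset Printing Implicit Defensive.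
Local Open Scope ring_scope.

(* Let [M] be the derivative of [h] at 0. Limit directions of the graph of [h]
   lie in the graph of [x |-> x *m M]; hence if [a_m -> 0] has such a limit
   direction, the point of the graph of [h] lying over the first component of
   [a_m] is at distance o(|a_m|) from [a_m]. Along a semiline [t *: a] one has
   [h (t *: a) = t *: (a *m M) + o(t)] with [a *m M <> 0], so every sequence of
   [h(ell)] tending to 0 has direction [a *m M / |a *m M|], provided it comes
   from parameters [t -> 0]: this is where continuity of [h^-1] at 0 is used. *)

Section EuclideanNorm.
Variable R : realType.
Implicit Types (k l : nat).

Lemma enorm_ge0 k (x : 'rV[R]_k) : 0 <= enorm x.
Proof. exact: sqrtr_ge0. Qed.

Lemma enorm_sq k (x : 'rV[R]_k) : enorm x ^+ 2 = \sum_i (x 0 i) ^+ 2.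
Proof. by rewrite sqr_sqrtr // sumr_ge0 // => i _; rewrite sqr_ge0. Qed.

Lemma ler_enorm k l (x : 'rV[R]_k) (y : 'rV[R]_l) :
  (enorm x <= enorm y) = (enorm x ^+ 2 <= enorm y ^+ 2).
Proof. by rewrite ler_pXn2r // nnegrE enorm_ge0. Qed.

Lemma coord_le_enorm k (x : 'rV[R]_k) i : `|x 0 i| <= enorm x.
Proof.
rewrite -sqrtr_sqr ler_sqrt -?enorm_sq ?sqr_ge0 // enorm_sq (bigD1 i) //=.
by rewrite lerDl sumr_ge0 // => j _; rewrite sqr_ge0.
Qed.

Lemma enorm0 k : enorm (0 : 'rV[R]_k) = 0.
Proof. by rewrite /enorm big1 ?sqrtr0 // => i _; rewrite mxE expr0n. Qed.

Lemma enorm_eq0 k (x : 'rV[R]_k) : (enorm x == 0) = (x == 0).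
Proof.
apply/eqP/eqP => [x0|->]; last exact: enorm0.
apply/rowP => i; apply/eqP; rewrite mxE -normr_eq0 eq_le normr_ge0 andbT.
by rewrite -x0 coord_le_enorm.
Qed.

Lemma enorm_gt0 k (x : 'rV[R]_k) : (0 < enorm x) = (x != 0).
Proof. by rewrite lt0r enorm_ge0 enorm_eq0 andbT. Qed.

Lemma enormZ k (c : R) (x : 'rV[R]_k) : enorm (c *: x) = `|c| * enorm x.
Proof.
rewrite /enorm (eq_bigr (fun i => c ^+ 2 * (x 0 i) ^+ 2)) => [|i _]; last first.
  by rewrite mxE exprMn.
by rewrite -mulr_sumr sqrtrM ?sqr_ge0 // sqrtr_sqr.
Qed.

Lemma enormN k (x : 'rV[R]_k) : enorm (- x) = enorm x.
Proof. by rewrite -scaleN1r enormZ normrN normr1 mul1r. Qed.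

Lemma enorm_distC k (x y : 'rV[R]_k) : enorm (x - y) = enorm (y - x).
Proof. by rewrite -enormN opprB. Qed.

Lemma cauchy_schwarz k (x y : 'rV[R]_k) :
  \sum_i x 0 i * y 0 i <= enorm x * enorm y.
Proof.
have [->|xn0] := eqVneq x 0.
  by rewrite big1 ?enorm0 ?mul0r // => i _; rewrite mxE mul0r.
have [->|yn0] := eqVneq y 0.
  by rewrite big1 ?enorm0 ?mulr0 // => i _; rewrite mxE mulr0.
set A := enorm x; set B := enorm y; set D := \sum_i _.
have sq_ge0 : 0 <= \sum_i (B * x 0 i - A * y 0 i) ^+ 2.
  by rewrite sumr_ge0 // => i _; rewrite sqr_ge0.
have : \sum_i (B * x 0 i - A * y 0 i) ^+ 2 =
    B ^+ 2 * \sum_i (x 0 i) ^+ 2 - 2 * A * B * D + A ^+ 2 * \sum_i (y 0 i) ^+ 2.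
  rewrite /D !mulr_sumr -sumrN -!big_split /=.
  by apply: eq_bigr => i _; ring.
rewrite -!enorm_sq -/A -/B => sq_eq.
have AB : 0 < A * B by rewrite mulr_gt0 // enorm_gt0.
nra.
Qed.

Lemma ler_enormD k (x y : 'rV[R]_k) : enorm (x + y) <= enorm x + enorm y.
Proof.
have A0 := enorm_ge0 x; have B0 := enorm_ge0 y.
rewrite -(@ler_pXn2r _ 2) ?nnegrE ?addr_ge0 ?enorm_ge0 //.
have -> : enorm (x + y) ^+ 2 =
    enorm x ^+ 2 + 2 * \sum_i x 0 i * y 0 i + enorm y ^+ 2.
  rewrite !enorm_sq mulr_sumr -!big_split /=.
  by apply: eq_bigr => i _; rewrite mxE; ring.
have := cauchy_schwarz x y; rewrite sqrrD; lra.
Qed.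

Lemma ler_enorm_sum k (I : finType) (F : I -> 'rV[R]_k) :
  enorm (\sum_i F i) <= \sum_i enorm (F i).
Proof.
elim/big_ind2: _ => [|x1 x2 y1 y2 le1 le2|//]; first by rewrite enorm0.
exact: le_trans (ler_enormD _ _) (lerD le1 le2).
Qed.

Lemma ler_enorm_dist k (x y : 'rV[R]_k) : `|enorm x - enorm y| <= enorm (x - y).
Proof.
have le_x : enorm x <= enorm (x - y) + enorm y.
  by rewrite -{1}(subrK y x) ler_enormD.
have le_y : enorm y <= enorm (x - y) + enorm x.
  by rewrite enorm_distC -{1}(subrK x y) ler_enormD.
rewrite ler_norml; apply/andP; split; lra.
Qed.

Lemma enorm_mulmx_le k l (A : 'M[R]_(k, l)) :
  exists2 C, 0 < C & forall x, enorm (x *m A) <= C * enorm x.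
Proof.
set S := \sum_i enorm (row i A).
have S0 : 0 <= S by rewrite sumr_ge0 // => i _; exact: enorm_ge0.
exists (S + 1) => [|x]; first by rewrite ltr_wpDl.
have le_S : enorm (x *m A) <= S * enorm x.
  rewrite mulmx_sum_row mulr_suml; apply: le_trans (ler_enorm_sum _) _.
  apply: ler_sum => i _; rewrite enormZ mulrC ler_wpM2l ?enorm_ge0 //.
  exact: coord_le_enorm.
by rewrite mulrDl mul1r (le_trans le_S) // lerDl enorm_ge0.
Qed.

Lemma enorm_mulmx_small k l (A : 'M[R]_(k, l)) e : 0 < e ->
  exists2 r, 0 < r & forall x, enorm x < r -> enorm (x *m A) <= e.
Proof.
move=> e0; have [C C0 leA] := enorm_mulmx_le A.
exists (e / C) => [|x]; first by rewrite divr_gt0.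
move=> /ltW; rewrite ler_pdivlMr // mulrC => le_xe.
exact: le_trans (leA x) le_xe.
Qed.

Lemma enorm_row_mx_sq k l (x : 'rV[R]_k) (y : 'rV[R]_l) :
  enorm (row_mx x y) ^+ 2 = enorm x ^+ 2 + enorm y ^+ 2.
Proof.
rewrite !enorm_sq big_split_ord /=.
by congr (_ + _); apply: eq_bigr => i _; rewrite ?row_mxEl ?row_mxEr.
Qed.

Lemma enorm_row_mxl k l (x : 'rV[R]_k) (y : 'rV[R]_l) :
  enorm x <= enorm (row_mx x y).
Proof. by rewrite ler_enorm enorm_row_mx_sq lerDl sqr_ge0. Qed.

Lemma enorm_lsubmx k l (z : 'rV[R]_(k + l)) : enorm (lsubmx z) <= enorm z.
Proof. by have := enorm_row_mxl (lsubmx z) (rsubmx z); rewrite hsubmxK. Qed.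

Lemma enorm_row0_mx k l (y : 'rV[R]_l) : enorm (row_mx (0 : 'rV[R]_k) y) = enorm y.
Proof.
apply/eqP; rewrite -(eqrXn2 (_ : 0 < 2)%N) ?enorm_ge0 //.
by rewrite enorm_row_mx_sq enorm0 expr0n add0r.
Qed.

Lemma normalize0 k : normalize (0 : 'rV[R]_k) = 0.
Proof. by rewrite /normalize scaler0. Qed.

Lemma normalizeK k (x : 'rV[R]_k) : enorm x *: normalize x = x.
Proof.
have [->|xn0] := eqVneq x 0; first by rewrite normalize0 scaler0.
by rewrite /normalize scalerA divff ?scale1r // gt_eqF // enorm_gt0.
Qed.

Lemma enorm_normalize k (x : 'rV[R]_k) : x != 0 -> enorm (normalize x) = 1.
Proof.
rewrite -enorm_gt0 => xp.
by rewrite enormZ ger0_norm ?invr_ge0 ?enorm_ge0 // mulVf // gt_eqF.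
Qed.

Lemma normalizeZ k (t : R) (x : 'rV[R]_k) : 0 < t -> normalize (t *: x) = normalize x.
Proof.
move=> t0; rewrite /normalize enormZ gtr0_norm // scalerA invfM mulrAC.
by rewrite mulVf ?gt_eqF // mul1r.
Qed.

Lemma enorm_normalizeB k (x y : 'rV[R]_k) : y != 0 ->
  enorm (normalize x - normalize y) <= 2 * enorm (x - y) / enorm y.
Proof.
rewrite -enorm_gt0 => yp.
have [->|] := eqVneq x 0.
  rewrite normalize0 !sub0r !enormN enorm_normalize -?enorm_gt0 //.
  by rewrite -mulrA divff ?gt_eqF // mulr1 ler1n.
rewrite -enorm_gt0 => xp.
have -> : normalize x - normalize y =
    ((enorm x)^-1 - (enorm y)^-1) *: x + (enorm y)^-1 *: (x - y).
  by rewrite /normalize scalerBl scalerBr addrA subrK.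
apply: le_trans (ler_enormD _ _) _.
rewrite !enormZ [`|(enorm y)^-1|]ger0_norm ?invr_ge0 ?enorm_ge0 //.
have -> : `|(enorm x)^-1 - (enorm y)^-1| * enorm x = `|enorm x - enorm y| / enorm y.
  have -> : (enorm x)^-1 - (enorm y)^-1 = (enorm y - enorm x) / (enorm x * enorm y).
    by field; rewrite !gt_eqF.
  rewrite normrM distrC ger0_norm ?invr_ge0 ?mulr_ge0 ?enorm_ge0 //.
  by field; rewrite !gt_eqF.
rewrite (mulrC _^-1) -mulrDl ler_pM2r ?invr_gt0 //.
have := ler_enorm_dist x y; lra.
Qed.

End EuclideanNorm.

Section Sequences.
Variable R : realType.
Implicit Types (k l : nat).

Definition eventually (P : nat -> Prop) := exists N, forall m, (N <= m)%N -> P m.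

Lemma eventually_and (P Q : nat -> Prop) :
  eventually P -> eventually Q -> eventually (fun m => P m /\ Q m).
Proof.
move=> [N1 P_N1] [N2 Q_N2]; exists (maxn N1 N2) => m; rewrite geq_max => /andP[].
by move=> /P_N1 ? /Q_N2.
Qed.

Lemma eventually_impl (P Q : nat -> Prop) :
  (forall m, P m -> Q m) -> eventually P -> eventually Q.
Proof. by move=> PQ [N P_N]; exists N => m /P_N /PQ. Qed.

Lemma eventually_ex (P : nat -> Prop) : eventually P -> exists m, P m.
Proof. by move=> [N P_N]; exists N; exact: P_N. Qed.

Lemma eventually_div_lt (r e : R) : 0 <= r -> 0 < e ->
  eventually (fun m => r / m.+1%:R < e).
Proof.
move=> r0 e0; exists (Num.Def.archi_bound (r / e)) => m le_bm.
rewrite ltr_pdivrMr // mulrC -ltr_pdivrMr //.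
apply: lt_le_trans (archi_boundP _) _; first by rewrite divr_ge0 // ltW.
by rewrite ler_nat (leq_trans le_bm).
Qed.

Lemma le0_of_le_pos (x : R) : (forall e, 0 < e -> x <= e) -> x <= 0.
Proof. by move=> le_x; apply/ler_addgt0Pr => e /le_x; rewrite add0r. Qed.

Lemma vcvg_unique k (u : nat -> 'rV[R]_k) c d : vcvg u c -> vcvg u d -> c = d.
Proof.
move=> cvg_c cvg_d; apply/eqP; rewrite -subr_eq0 -enorm_eq0 eq_le enorm_ge0 andbT.
apply: le0_of_le_pos => e e0; have e2 : 0 < e / 2 by rewrite divr_gt0.
have [m [lt_c lt_d]] := eventually_ex (eventually_and (cvg_c _ e2) (cvg_d _ e2)).
have : enorm (c - d) <= enorm (u m - c) + enorm (u m - d).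
  have -> : c - d = (u m - d) - (u m - c) by rewrite opprB [RHS]addrC addrA subrK.
  by rewrite -(enormN (u m - c)) [leRHS]addrC ler_enormD.
lra.
Qed.

Lemma vcvg_mulmx_eq0 k l (u : nat -> 'rV[R]_k) d (A : 'M[R]_(k, l)) :
  vcvg u d -> (forall e, 0 < e -> eventually (fun m => enorm (u m *m A) <= e)) ->
  d *m A = 0.
Proof.
move=> cvg_d small_uA; apply/eqP; rewrite -enorm_eq0 eq_le enorm_ge0 andbT.
apply: le0_of_le_pos => e e0; have e2 : 0 < e / 2 by rewrite divr_gt0.
have [r r0 small_A] := enorm_mulmx_small A e2.
have [m [lt_r le_uA]] := eventually_ex (eventually_and (cvg_d _ r0) (small_uA _ e2)).
have le_dA : enorm ((d - u m) *m A) <= e / 2 by rewrite small_A // enorm_distC.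
have : enorm (d *m A) <= enorm ((d - u m) *m A) + enorm (u m *m A).
  by rewrite -{1}(subrK (u m) d) mulmxDl ler_enormD.
lra.
Qed.

Lemma eventually_neq0 k (a : nat -> 'rV[R]_k) d :
  enorm d = 1 -> vcvg (fun m => normalize (a m)) d -> eventually (fun m => a m != 0).
Proof.
move=> d1 cvg_d; apply: eventually_impl (cvg_d _ ltr01) => m.
by apply: contraTneq => ->; rewrite normalize0 sub0r enormN d1 ltxx.
Qed.

(* [a m *m A = |a m| *: ((normalize (a m) - d) *m A)]. *)
Lemma eventually_mulmx_negl k l (a : nat -> 'rV[R]_k) d (A : 'M[R]_(k, l)) :
  vcvg (fun m => normalize (a m)) d -> d *m A = 0 ->
  forall c, 0 < c -> eventually (fun m => enorm (a m *m A) <= c * enorm (a m)).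
Proof.
move=> cvg_d dA0 c c0; have [r r0 small_A] := enorm_mulmx_small A c0.
apply: eventually_impl (cvg_d _ r0) => m /small_A le_c.
rewrite -{1}(normalizeK (a m)) -scalemxAl enormZ ger0_norm ?enorm_ge0 // mulrC.
by rewrite ler_wpM2r ?enorm_ge0 // -[_ *m A]subr0 -dA0 -mulmxBl.
Qed.

Lemma negl_subr k (a b : nat -> 'rV[R]_k) :
  (forall c, 0 < c ->
    eventually (fun m => a m != 0 /\ enorm (a m - b m) <= c * enorm (a m))) ->
  negl (fun m => a m - b m) a /\ negl (fun m => a m - b m) b.
Proof.
move=> small; split => e e0.
- have e2 : 0 < e / 2 by rewrite divr_gt0.
  apply: eventually_impl (small _ e2) => m [an0 le_ab].
  rewrite ger0_norm ?divr_ge0 ?enorm_ge0 // ltr_pdivrMr ?enorm_gt0 //.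
  by apply: le_lt_trans le_ab _; rewrite ltr_pM2r ?enorm_gt0 //; lra.
- (* [|a - b| <= c |a|] forces [|b| >= (1 - c) |a|], and [c / (1 - c) < e]. *)
  set c := e / (2 * (1 + e)).
  have c0 : 0 < c by rewrite divr_gt0 // mulr_gt0 // addr_gt0.
  have ce : c * (1 + e) = e / 2 by rewrite /c; field; rewrite gt_eqF // addr_gt0.
  apply: eventually_impl (small _ c0) => m [an0 le_ab].
  have ap : 0 < enorm (a m) by rewrite enorm_gt0.
  have le_a : enorm (a m) <= enorm (a m - b m) + enorm (b m).
    by rewrite -{1}(subrK (b m) (a m)) ler_enormD.
  have bp : 0 < enorm (b m) by nra.
  rewrite ger0_norm ?divr_ge0 ?enorm_ge0 // ltr_pdivrMr //.
  have := enorm_ge0 (a m - b m); nra.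
Qed.

End Sequences.

(* [diff_at0_inv U h] unfolds to [exists M, M \in unitmx /\ lin_approx0 U h M]. *)
Definition lin_approx0 (R : realType) n (U : 'rV[R]_n -> Prop)
    (h : 'rV[R]_n -> 'rV[R]_n) (M : 'M[R]_n) :=
  forall e : R, 0 < e -> exists d : R, 0 < d /\
    forall x, U x -> enorm x < d -> enorm (h x - x *m M) <= e * enorm x.

Section Graph.
Variables (R : realType) (n : nat) (U : 'rV[R]_n -> Prop).
Variables (h : 'rV[R]_n -> 'rV[R]_n) (M : 'M[R]_n).

(* The graph of [x |-> x *m M] is the kernel of [z |-> z *m graph_eqn]. *)
Definition graph_eqn : 'M[R]_(n + n, n) := col_mx (- M) 1%:M.

Lemma mul_row_graph_eqn (x y : 'rV[R]_n) : row_mx x y *m graph_eqn = y - x *m M.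
Proof. by rewrite mul_row_col mulmxN mulmx1 addrC. Qed.

Lemma enorm_sub_graph (z : 'rV[R]_(n + n)) :
  enorm (z - row_mx (lsubmx z) (h (lsubmx z))) <=
  enorm (z *m graph_eqn) + enorm (h (lsubmx z) - lsubmx z *m M).
Proof.
have := hsubmxK z; set x := lsubmx z; set y := rsubmx z; move=> <-.
rewrite opp_row_mx add_row_mx subrr enorm_row0_mx mul_row_graph_eqn.
have -> : y - h x = (y - x *m M) - (h x - x *m M) by rewrite opprB addrA subrK.
by rewrite -(enormN (h x - _)) ler_enormD.
Qed.

Hypothesis approx : lin_approx0 U h M.

Lemma Dir_graph_eqn d : Dir (graph_on U h) d -> d *m graph_eqn = 0.
Proof.
move=> [_ [z [graph_z [cvg_z cvg_dir]]]].
apply: (vcvg_mulmx_eq0 cvg_dir) => e e0.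
have [r [r0 approx_r]] := approx e0.
apply: eventually_impl (cvg_z _ r0) => m; rewrite subr0.
have [[x [Ux ->]] zn0] := graph_z m => lt_r.
have le_x := enorm_row_mxl x (h x).
have zp : 0 < enorm (row_mx x (h x)) by rewrite enorm_gt0.
rewrite -scalemxAl enormZ ger0_norm ?invr_ge0 ?enorm_ge0 // mul_row_graph_eqn.
rewrite ler_pdivrMl // mulrC.
exact: le_trans (approx_r _ Ux (le_lt_trans le_x lt_r)) (ler_wpM2l (ltW e0) le_x).
Qed.

Hypotheses (oU : eopen U) (U0 : U 0) (h0 : h 0 = 0).

Lemma SSP_graph : SSP (graph_on U h).
Proof.
move=> a cvg_a [d [Dd cvg_d]].
pose b m := if pselect (U (lsubmx (a m)))
  then row_mx (lsubmx (a m)) (h (lsubmx (a m))) else 0.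
exists b; split.
  move=> m; rewrite /b; case: pselect => [Ux|?]; first by exists (lsubmx (a m)).
  by exists 0; rewrite h0 row_mx0.
apply: negl_subr => c c0; have c2 : 0 < c / 2 by rewrite divr_gt0.
have [r [r0 Ur]] := oU U0.
have [dl [dl0 approx_dl]] := approx c2.
have small_aP := eventually_mulmx_negl cvg_d (Dir_graph_eqn Dd) c2.
apply: eventually_impl (eventually_and (eventually_neq0 Dd.1 cvg_d)
  (eventually_and small_aP (eventually_and (cvg_a _ r0) (cvg_a _ dl0)))).
move=> m [an0 [le_aP [lt_r lt_dl]]]; split => //; rewrite subr0 in lt_r lt_dl.
have le_x := enorm_lsubmx (a m).
have Ux : U (lsubmx (a m)) by apply: Ur; rewrite subr0 (le_lt_trans le_x).
rewrite /b; case: pselect => // ?; apply: le_trans (enorm_sub_graph _) _.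
have := approx_dl _ Ux (le_lt_trans le_x lt_dl).
have := ler_wpM2l (ltW c2) le_x; lra.
Qed.

End Graph.

Section Semiline.
Variables (R : realType) (n : nat) (U V : 'rV[R]_n -> Prop).
Variables (h g : 'rV[R]_n -> 'rV[R]_n) (M : 'M[R]_n) (a : 'rV[R]_n).
Hypotheses (approx : lin_approx0 U h M) (a1 : enorm a = 1) (aMn0 : a *m M != 0).

Lemma enorm_semiline t : 0 <= t -> enorm (t *: a) = t.
Proof. by move=> t0; rewrite enormZ a1 mulr1 ger0_norm. Qed.

(* [h (t *: a) = t *: (a *m M) + o(t)], and normalization is Lipschitz near [a *m M]. *)
Lemma normalize_semiline_image e : 0 < e -> exists2 dl, 0 < dl &
  forall t, 0 < t -> t < dl -> U (t *: a) ->
  enorm (normalize (h (t *: a)) - normalize (a *m M)) <= e.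
Proof.
move=> e0; have wp : 0 < enorm (a *m M) by rewrite enorm_gt0.
have e'0 : 0 < e * enorm (a *m M) / 2 by rewrite divr_gt0 // mulr_gt0.
have [dl [dl0 approx_dl]] := approx e'0.
exists dl => // t t0 lt_dl Ut.
have := approx_dl _ Ut; rewrite (enorm_semiline (ltW t0)) -scalemxAl.
move=> /(_ lt_dl) le_o.
have tw0 : t *: (a *m M) != 0 by rewrite scaler_eq0 negb_or gt_eqF.
rewrite -(normalizeZ (a *m M) t0); apply: le_trans (enorm_normalizeB _ tw0) _.
by rewrite enormZ gtr0_norm // ler_pdivrMr ?mulr_gt0 //; lra.
Qed.

Hypotheses (U0 : U 0) (h0 : h 0 = 0) (V0 : V 0) (g0 : g 0 = 0).
Hypotheses (ghK : forall x, U x -> V (h x) /\ g (h x) = x) (cont_g : econt_on V g).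

Lemma semiline_param_small dl : 0 < dl -> exists2 r, 0 < r &
  forall t, 0 <= t -> U (t *: a) -> enorm (h (t *: a)) < r -> t < dl.
Proof.
move=> dl0; have [r [r0 cont_r]] := cont_g V0 dl0.
exists r => // t t0 Ut lt_r; have [Vh ghK_t] := ghK Ut.
by have := cont_r _ Vh; rewrite !subr0 ghK_t g0 subr0 enorm_semiline //; apply.
Qed.

Lemma Dir_semiline_image c : Dir (semiline_image U h a) c -> c = normalize (a *m M).
Proof.
move=> [_ [x [image_x [cvg_x cvg_dir]]]]; apply: (vcvg_unique cvg_dir) => e e0.
have e2 : 0 < e / 2 by rewrite divr_gt0.
have [dl dl0 near_w] := normalize_semiline_image e2.
have [r r0 small_t] := semiline_param_small dl0.
apply: eventually_impl (cvg_x _ r0) => m; rewrite subr0.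
have [[t [t0 [Ut ->]]] hn0] := image_x m => lt_r.
have tp : 0 < t by rewrite lt0r t0 andbT; apply: contraNneq hn0 => ->; rewrite scale0r h0.
by have := near_w t tp (small_t _ t0 Ut lt_r) Ut; lra.
Qed.

Hypotheses (oU : eopen U) (cont_h : econt_on U h).

Lemma Dir_semiline_image_normalize : Dir (semiline_image U h a) (normalize (a *m M)).
Proof.
split; first exact: enorm_normalize.
have [r [r0 Ur]] := oU U0.
pose t m := r / 2 / m.+1%:R.
have tp m : 0 < t m by rewrite !divr_gt0.
have lt_t m : t m < r.
  have : t m <= r / 2 by rewrite ler_pdivrMr // ler_peMr ?ler1n ?divr_ge0 ?ltW.
  lra.
have small_t e : 0 < e -> eventually (fun m => t m < e).
  by apply: eventually_div_lt; rewrite divr_ge0 ?ltW.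
have Ut m : U (t m *: a) by apply: Ur; rewrite subr0 enorm_semiline ?ltW.
exists (fun m => h (t m *: a)); split; [|split].
- move=> m; split; first by exists (t m); rewrite ltW.
  apply/eqP => h_t0; have := (ghK (Ut m)).2; rewrite h_t0 g0 => /esym/eqP.
  by rewrite scaler_eq0 gt_eqF //= -enorm_eq0 a1 oner_eq0.
- move=> e e0; have [d [d0 cont_d]] := cont_h U0 e0.
  apply: eventually_impl (small_t _ d0) => m lt_d.
  by rewrite -h0 cont_d // subr0 enorm_semiline ?ltW.
- move=> e e0; have e2 : 0 < e / 2 by rewrite divr_gt0.
  have [dl dl0 near_w] := normalize_semiline_image e2.
  apply: eventually_impl (small_t _ dl0) => m lt_dl.
  by have := near_w _ (tp m) lt_dl (Ut m); lra.
Qed.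

End Semiline.

Lemma semiline_SSP_of_lin_approx0 (R : realType) n (U V : 'rV[R]_n -> Prop)
    (h g : 'rV[R]_n -> 'rV[R]_n) (M : 'M[R]_n) :
  homeo_germ U V h g -> M \in unitmx -> lin_approx0 U h M -> semiline_SSP U h.
Proof.
move=> [oU [_ [U0 [V0 [h0 [ghK [_ [cont_h cont_g]]]]]]]] Mu approx a a1.
have g0 : g 0 = 0 by have := (ghK 0 U0).2; rewrite h0.
have an0 : a != 0 by rewrite -enorm_eq0 a1 oner_eq0.
have aMn0 : a *m M != 0.
  by apply: contraNneq an0 => aM0; rewrite -(mulmxK Mu a) aM0 mul0mx.
exists (normalize (a *m M)) => c; split => [|->].
- exact: (Dir_semiline_image approx a1 aMn0 h0 V0 g0 ghK cont_g).
- exact: (Dir_semiline_image_normalize approx a1 aMn0 U0 h0 g0 ghK oU cont_h).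
Qed.

Theorem theorem4p19 (R : realType) (n : nat)
  (U V : 'rV[R]_n -> Prop) (h g : 'rV[R]_n -> 'rV[R]_n) :
  weak_diffeo U V h g ->
  SSP (graph_on U h) /\ semiline_SSP U h.
Proof.
move=> [hg [[M [Mu approx]] _]]; have [oU [_ [U0 [_ [h0 _]]]]] := hg.
split; first exact: (SSP_graph approx oU U0 h0).
exact: (semiline_SSP_of_lin_approx0 hg Mu approx).
Qed.
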